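(* Let $p_1,\dots,p_n$ be distinct primes. Let $X_1=\mathbb Z/(p_1)$ with the solution $r_1$ given by $\sigma_x(y)=y+1$ (any indecomposable solution on $p_1$ points may be used). Inductively, for $2\le j\le n$, let $X_j=\mathbb Z/(p_j)\times X_{j-1}$ and define $r_j((a,x),(b,y))=(\sigma_{(a,x)}(b,y),\sigma^{-1}_{\sigma_{(a,x)}(b,y)}(a,x))$, where $\sigma_{(a,x)}(b,y)=(b+\delta_{x,\sigma_x(y)},\ \sigma_x(y))$, $\sigma_x$ being the maps of $(X_{j-1},r_{j-1})$ and $\delta$ the Kronecker delta. Then for every $2\le j\le n$: $(X_j,r_j)$ is an indecomposable solution of the YBE with $|X_j|=p_1\cdots p_j$; $\mathrm{Ret}(X_j,r_j)\cong(X_{j-1},r_{j-1})$ (via $\overline{(a,x)}\mapsto x$); and $\mathcal G(X_j,r_j)\cong (\mathbb Z/(p_j))^{|X_{j-1}|}\rtimes_\alpha\mathcal G(X_{j-1},r_{j-1})$ as left braces, where $\alpha(g)((a_x)_{x\in X_{j-1}})=(a_{g^{-1}(x)})_{x\in X_{j-1}}$. Consequently $(X_n,r_n)$ is an indecomposable multipermutation solution of cardinality $p_1\cdots p_n$ and multipermutation level exactly $n$, with $|\mathcal G(X_n,r_n)|=p_1p_2^{p_1}p_3^{p_1p_2}\cdots p_n^{p_1\cdots p_{n-1}}$.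
   Context: A solution of the Yang–Baxter equation (YBE) is a pair $(X,r)$, where $X$ is a non-empty set and $r\colon X\times X\to X\times X$, written $r(x,y)=(\sigma_x(y),\gamma_y(x))$, satisfies: $r^2=\mathrm{id}$; all $\sigma_x,\gamma_y$ are bijections of $X$; and $r_{12}r_{23}r_{12}=r_{23}r_{12}r_{23}$ on $X^3$, where $r_{12}=r\times\mathrm{id}_X$, $r_{23}=\mathrm{id}_X\times r$. Equivalently, for bijections $\sigma_x$, the map $r(x,y)=(\sigma_x(y),\sigma^{-1}_{\sigma_x(y)}(x))$ is a solution iff $\sigma_x\sigma_{\sigma_x^{-1}(y)}=\sigma_y\sigma_{\sigma_y^{-1}(x)}$ for all $x,y$. $\mathcal G(X,r)=\langle\sigma_x:x\in X\rangle\le\mathrm{Sym}_X$; indecomposable means $\mathcal G(X,r)$ is transitive on $X$. Retract: $x\sim y\iff\sigma_x=\sigma_y$, inducing a solution $\mathrm{Ret}(X,r)$ on $X/{\sim}$; multipermutation level = least $k$ with $|\mathrm{Ret}^k(X,r)|=1$. A left brace is a set $B$ with $+$ and $\circ$ such that $(B,+)$ is abelian, $(B,\circ)$ is a group and $a\circ(b+c)+a=a\circ b+a\circ c$; $\lambda_a(b)=-a+a\circ b$; a trivial brace has $a\circ b=a+b$ (here $\mathbb Z/(p_j)^{m}$ is regarded as a trivial brace). For left braces $I,L$ and a group homomorphism $\alpha\colon(L,\circ)\to\mathrm{Aut}(I,+,\circ)$, the semidirect product $I\rtimes_\alpha L$ is the left brace with multiplicative group the semidirect product via $\alpha$ and componentwise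 addition. The brace structure on $\mathcal G(X,r)$: the structure group $G(X,r)=\langle x\in X\mid xy=\sigma_x(y)\gamma_y(x)\rangle$ is a left brace with additive group free abelian on $X$ and $\lambda_x(y)=\sigma_x(y)$; $x\mapsto\sigma_x$ extends to a group epimorphism $\phi\colon G(X,r)\to\mathcal G(X,r)$ with kernel $\{a:ab=a+b\ \forall b\}$, and $\mathcal G(X,r)$ carries the unique left brace structure making $\phi$ a brace homomorphism. *)

From mathcomp Require Import all_boot all_order all_algebra all_fingroup.
Set Implicit Arguments. Unset Strict Implicit. Unset Printing Implicit Defensive.
Import GRing.Theory.
Local Open Scope ring_scope.

Section Generic.
Variable X : finType.
Implicit Types (r : X * X -> X * X).

Definition sig_of r (x y : X) : X := (r (x, y)).1.
Definition gam_of r (y x : X) : X := (r (x, y)).2.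

Definition r12 r (t : X * X * X) : X * X * X :=
  ((r (t.1.1, t.1.2)).1, (r (t.1.1, t.1.2)).2, t.2).
Definition r23 r (t : X * X * X) : X * X * X :=
  (t.1.1, (r (t.1.2, t.2)).1, (r (t.1.2, t.2)).2).

Definition is_solution r : Prop :=
  [/\ forall z, r (r z) = z,
      forall x, bijective (sig_of r x),
      forall y, bijective (gam_of r y)
    & forall t, r12 r (r23 r (r12 r t)) = r23 r (r12 r (r23 r t))].

Definition r_of (s : X -> X -> X) (t : X * X) : X * X :=
  (s t.1 t.2, finv (s (s t.1 t.2)) t.1).

(* the permutation equal to f (identity if f is not bijective) *)
Definition perm_of (f : X -> X) : {perm X} :=
  odflt 1%g [pick g : {perm X} | [forall y, g y == f y]].

Definition sigp r (x : X) : {perm X} := perm_of (sig_of r x).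

Definition Gcal r : {group {perm X}} := (<<[set sigp r x | x : X]>>)%G.

Definition indecomposable r : Prop := [transitive Gcal r, on [set: X] | 'P].

(* ret_rel r k : the equivalence on X whose classes are the points of Ret^k(X,r):
   x ~_0 y iff x = y;  x ~_{k+1} y iff sigma_[x] = sigma_[y] in Ret^k(X,r),
   i.e. sigma_x(z) ~_k sigma_y(z) for all z. *)
Fixpoint ret_rel r (k : nat) : rel X :=
  match k with
  | 0 => fun x y => x == y
  | k'.+1 => fun x y => [forall z, ret_rel r k' (sig_of r x z) (sig_of r y z)]
  end.

Definition ret_trivial r (k : nat) : Prop := forall x y, ret_rel r k x y.
Definition multiperm r : Prop := exists k, ret_trivial r k.
Definition mp_level r (n : nat) : Prop :=
  ret_trivial r n /\ forall k, (k < n)%N -> ~ ret_trivial r k.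

End Generic.

(* Ret(X,r) is isomorphic to (Y,r') via the map induced by f : X -> Y,
   i.e. f is onto, its fibres are exactly the classes x ~ y <-> sigma_x = sigma_y,
   and the induced bijection X/~ -> Y maps the retract solution to r'. *)
Definition ret_iso_via (X Y : finType) (r : X * X -> X * X) (r' : Y * Y -> Y * Y)
    (f : X -> Y) : Prop :=
  [/\ forall y, exists x, f x = y,
      forall u v, f u = f v <-> sig_of r u =1 sig_of r v
    & forall u v, (f (r (u, v)).1, f (r (u, v)).2) = r' (f u, f v)].

(* Z^X : the additive group of the structure group (free abelian on X) *)
Definition ebasis (X : finType) (x : X) : {ffun X -> int} :=
  [ffun y => ((x == y) : nat)%:Z].

Definition pact (X : finType) (R : Type) (g : {perm X}) (a : {ffun X -> R}) : {ffun X -> R} :=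
  [ffun x => a ((g^-1)%g x)].

(* lam : Z^X -> Sym_X is the lambda-map of the structure group G(X,r)
   (= the epimorphism phi : G(X,r) -> \mathcal G(X,r)):
   lam(x) = sigma_x and lam(a o b) = lam(a) lam(b) with a o b = a + lam_a(b).
   (mathcomp's product g * h means "first g, then h".) *)
Definition is_lam (X : finType) (r : X * X -> X * X)
    (lam : {ffun X -> int} -> {perm X}) : Prop :=
  (forall x, lam (ebasis x) = sigp r x) /\
  (forall a b, lam (a + pact (lam a) b) = (lam b * lam a)%g).

Fixpoint Xt (p : nat -> nat) (j : nat) {struct j} : finType :=
  match j with
  | 0 => 'Z_(p 1)
  | j'.+1 => match j' with
             | 0 => 'Z_(p 1)
             | _.+1 => ('Z_(p j) * Xt p j')%type
             end
  end.

Fixpoint sig (p : nat -> nat) (j : nat) {struct j} : Xt p j -> Xt p j -> Xt p j :=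
  match j as j0 return Xt p j0 -> Xt p j0 -> Xt p j0 with
  | 0 => fun (x y : 'Z_(p 1)) => (y + 1 : 'Z_(p 1))
  | j'.+1 =>
    (match j' as k return (Xt p k -> Xt p k -> Xt p k) ->
                          Xt p k.+1 -> Xt p k.+1 -> Xt p k.+1 with
     | 0 => fun _ (x y : 'Z_(p 1)) => (y + 1 : 'Z_(p 1))
     | k'.+1 => fun (f : Xt p k'.+1 -> Xt p k'.+1 -> Xt p k'.+1)
                    (u v : ('Z_(p k'.+2) * Xt p k'.+1)%type) =>
                  ((v.1 + ((u.2 == f u.2 v.2) : nat)%:R : 'Z_(p k'.+2)), f u.2 v.2)
     end) (@sig p j')
  end.

Arguments sig p j : clear implicits.

Definition rX (p : nat -> nat) (j : nat) := r_of (sig p j).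
Arguments rX p j : clear implicits.

Definition proj (p : nat -> nat) (k : nat) (u : Xt p k.+2) : Xt p k.+1 := u.2.
Arguments proj p k u : clear implicits.

(* multiplication of the semidirect product (Z/(q))^{Y} x|_alpha G, with
   alpha(g)((a_y)_y) = (a_{g^{-1}(y)})_y ; the group law of G(Y) is composition *)
Definition sd_mul (Y : finType) (q : nat) (u v : {ffun Y -> 'Z_q} * {perm Y}) :=
  (u.1 + pact u.2 v.1, (v.2 * u.2)%g).

(* \mathcal G(X_{k+2}, r_{k+2}) ~= (Z/(p_{k+2}))^{|X_{k+1}|} x|_alpha \mathcal G(X_{k+1}, r_{k+1})
   as left braces.  The brace on \mathcal G is the one making lam (= phi) a brace
   homomorphism: lam a + lam b = lam (a + b), and its product is composition. *)
Definition brace_iso_sd (p : nat -> nat) (k : nat) : Prop :=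
  exists (lamX : {ffun Xt p k.+2 -> int} -> {perm Xt p k.+2})
         (lamY : {ffun Xt p k.+1 -> int} -> {perm Xt p k.+1}),
  [/\ is_lam (rX p k.+2) lamX, is_lam (rX p k.+1) lamY &
  exists F : {perm Xt p k.+2} -> {ffun Xt p k.+1 -> 'Z_(p k.+2)} * {perm Xt p k.+1},
  [/\ {in Gcal (rX p k.+2) &, injective F},
      forall g, g \in Gcal (rX p k.+2) -> (F g).2 \in Gcal (rX p k.+1),
      forall i l, l \in Gcal (rX p k.+1) ->
        exists2 g, g \in Gcal (rX p k.+2) & F g = (i, l),
      {in Gcal (rX p k.+2) &, forall g h, F (h * g)%g = sd_mul (F g) (F h)}
    & forall a b c d, lamY c = (F (lamX a)).2 -> lamY d = (F (lamX b)).2 ->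
        F (lamX (a + b)) = ((F (lamX a)).1 + (F (lamX b)).1, lamY (c + d))]].

(* On X_j = Z/(p_j) x X_{j-1}, each sigma_{(a,x)} is the "affine"
   permutation (b,y) |-> (b + f(sigma_x y), sigma_x y) with f the indicator of x, and such
   permutations compose like the semidirect product (Z/(p_j))^{X_{j-1}} x| Sym(X_{j-1}).
   Pushing the lambda-map of G(X_{j-1}) forward along the fibres of X_j -> X_{j-1} and
   reducing mod p_j gives the lambda-map of X_j; since p_j is prime to |X_{j-1}|, which is a
   period of the lower lambda-map, every pair (f, g) with g in G(X_{j-1}) is reached, so
   |G(X_j)| = p_j^{|X_{j-1}|} |G(X_{j-1})|. *)
From Pilot Require Import Defs.
From mathcomp Require Import all_boot all_order all_algebra all_fingroup.
From mathcomp Require Import zify.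
Set Implicit Arguments. Unset Strict Implicit. Unset Printing Implicit Defensive.
Import Order.TTheory GRing.Theory Num.Theory.

Section SolutionOfSigma.
Variables (T : finType) (s : T -> T -> T).
Hypothesis s_inj : forall x, injective (s x).

(* The first coordinate of the braid relation for r_of s. *)
Definition sigma_braid :=
  forall x y z, s (s x y) (s (finv (s (s x y)) x) z) = s x (s y z).

Lemma r_of_involutive z : r_of s (r_of s z) = z.
Proof. by case: z => x y; rewrite /r_of /= f_finv // finv_f. Qed.

Lemma r12_involutive t : r12 (r_of s) (r12 (r_of s) t) = t.
Proof. by case: t => [[x y] z]; rewrite /r12 /r_of /= f_finv // finv_f. Qed.

Lemma r23_involutive t : r23 (r_of s) (r23 (r_of s) t) = t.
Proof. by case: t => [[x y] z]; rewrite /r23 /r_of /= f_finv // finv_f. Qed.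

(* V and W are involutions agreeing on the first coordinate; conjugating V W by r12 and by
   r23 moves the second and third coordinates to the first one, which forces V W = id. *)
Lemma r_of_braid : sigma_braid -> forall t,
  r12 (r_of s) (r23 (r_of s) (r12 (r_of s) t)) =
  r23 (r_of s) (r12 (r_of s) (r23 (r_of s) t)).
Proof.
move=> braid.
pose V t := r12 (r_of s) (r23 (r_of s) (r12 (r_of s) t)).
pose W t := r23 (r_of s) (r12 (r_of s) (r23 (r_of s) t)).
have VK t : V (V t) = t by rewrite /V !(r12_involutive, r23_involutive).
have WK t : W (W t) = t by rewrite /W !(r12_involutive, r23_involutive).
have VW1 t : (V t).1.1 = (W t).1.1.
  by case: t => [[x y] z]; rewrite /V /W /r12 /r23 /r_of /= braid.
pose Q t := V (W t).
have Q1 t : (Q t).1.1 = t.1.1 by rewrite /Q VW1 WK.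
have WV1 t : (W (V t)).1.1 = t.1.1 by rewrite -VW1 VK.
have r12_conj t : r12 (r_of s) (Q (r12 (r_of s) t)) = W (V t).
  by rewrite /Q /V /W !(r12_involutive, r23_involutive).
have r23_conj t : r23 (r_of s) (Q (r23 (r_of s) t)) = W (V t).
  by rewrite /Q /V /W !(r12_involutive, r23_involutive).
have Q2 t : (Q t).1.2 = t.1.2.
  have := WV1 (r12 (r_of s) t); rewrite -r12_conj r12_involutive.
  move: (Q1 t); case: (Q t) => [[a b] c].
  by case: t => [[x y] z]; rewrite /r12 /r_of /= => -> /s_inj.
have WV2 t : (W (V t)).1.2 = t.1.2.
  by rewrite -[in RHS](_ : Q (W (V t)) = t) ?Q2 // /Q WK VK.
have Q3 t : (Q t).2 = t.2.
  have := WV2 (r23 (r_of s) t); rewrite -r23_conj r23_involutive.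
  move: (Q2 t); case: (Q t) => [[a b] c].
  by case: t => [[x y] z]; rewrite /r23 /r_of /= => -> /s_inj.
have QE t : Q t = t.
  case: t => [[x y] z]; move: (Q1 (x, y, z)) (Q2 (x, y, z)) (Q3 (x, y, z)).
  by case: (Q _) => [[a b] c] /= -> -> ->.
by move=> t; have := QE (W t); rewrite /Q WK.
Qed.

Lemma r_of_solution :
  sigma_braid -> (forall y, injective (fun x => finv (s (s x y)) x)) ->
  is_solution (r_of s).
Proof.
move=> braid gam_inj; split.
- exact: r_of_involutive.
- by move=> x; apply: injF_bij; exact: s_inj.
- by move=> y; apply: injF_bij; exact: gam_inj.
- exact: r_of_braid.
Qed.

End SolutionOfSigma.

Lemma ret_relS (T : finType) (r : T * T -> T * T) k x y :
  ret_rel r k.+1 x y = [forall z, ret_rel r k (sig_of r x z) (sig_of r y z)].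
Proof. by []. Qed.

Lemma ret_rel_refl (T : finType) (r : T * T -> T * T) k x : ret_rel r k x x.
Proof. by elim: k x => [|k IH] x /=; [exact: eqxx | apply/forallP]. Qed.

Lemma transitive_reach (T : finType) (G : {group {perm T}}) (t0 : T) :
  (forall x y, exists2 g, g \in G & g x = y) -> [transitive G, on [set: T] | 'P].
Proof.
move=> reach; apply/imsetP; exists t0; first by rewrite inE.
apply/setP => y; rewrite inE; symmetry; apply/orbitP.
by have [g Gg gt0] := reach t0 y; exists g; rewrite ?apermE.
Qed.

Lemma reach_transitive (T : finType) (G : {group {perm T}}) :
  [transitive G, on [set: T] | 'P] -> forall x y, exists2 g, g \in G & g x = y.
Proof.
move=> trG x y; have : y \in orbit 'P G x by rewrite (atransP trG) ?inE.
by case/orbitP => g Gg <-; exists g.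
Qed.

Section PermAction.
Local Open Scope ring_scope.
Variable T : finType.

Lemma pact0 (g : {perm T}) : pact g (0 : {ffun T -> int}) = 0.
Proof. by apply/ffunP => y; rewrite !ffunE. Qed.

Lemma pact_ebasis (g : {perm T}) x : pact g (ebasis x) = ebasis (g x).
Proof.
apply/ffunP => y; rewrite !ffunE; congr (Posz (nat_of_bool _)).
by apply/eqP/eqP => [->|<-]; rewrite ?permKV ?permK.
Qed.

Lemma sum_pact (g : {perm T}) (b : {ffun T -> int}) : \sum_y pact g b y = \sum_y b y.
Proof.
by rewrite (reindex_inj (@perm_inj _ g)); apply: eq_bigr => y _; rewrite ffunE permK.
Qed.

Lemma perm_ofE (f : T -> T) : injective f -> Defs.perm_of f =1 f.
Proof.
move=> f_inj; rewrite /Defs.perm_of; case: pickP => [g /forallP gf|none] x /=.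
  exact/eqP.
by case/negP: (none (perm f_inj)); apply/forallP => y; rewrite permE.
Qed.

End PermAction.

Section StructureGroupLambda.
Local Open Scope ring_scope.
Variables (T : finType) (s : T -> T -> T).
Hypothesis s_inj : forall x, injective (s x).

Lemma sigpE x : sigp (r_of s) x =1 s x.
Proof. by apply: perm_ofE; exact: s_inj. Qed.

Variable lam : {ffun T -> int} -> {perm T}.
Hypothesis lamP : is_lam (r_of s) lam.

Lemma lam0 : lam 0 = 1%g.
Proof.
case: lamP => _ lamM; have := lamM 0 0; rewrite pact0 addr0 => e.
by apply: (mulgI (lam 0)); rewrite mulg1 -e.
Qed.

Lemma lamD_ebasis a x :
  lam (a + ebasis x) = (sigp (r_of s) ((lam a)^-1 x) * lam a)%g.
Proof.
case: lamP => lam_e lamM; rewrite -lam_e -lamM.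
by rewrite pact_ebasis permKV.
Qed.

Lemma Gcal_lam g : g \in Gcal (r_of s) -> exists a, lam a = g.
Proof.
case/gen_prodgP => n [c c_gen ->]; elim: n c c_gen => [|n IH] c c_gen.
  by exists 0; rewrite big_ord0 lam0.
rewrite big_ord_recr /=.
have [a <-] := IH (fun i => c (widen_ord (leqnSn n) i)) (fun i => c_gen _).
have /imsetP [x _ ->] := c_gen ord_max.
case: lamP => lam_e lamM.
by exists (ebasis x + pact (lam (ebasis x)) a); rewrite lamM lam_e.
Qed.

(* Peeling off one basis vector at a time writes lam a as a product of generators. *)
Lemma lam_nonneg_in_Gcal (n : nat) (a : {ffun T -> int}) :
  (forall y, 0 <= a y) -> (\sum_y `|a y|)%N = n -> lam a \in Gcal (r_of s).
Proof.
elim: n a => [|n IH] a a_ge0 sum_a.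
  suff -> : a = 0 by rewrite lam0 group1.
  apply/ffunP => y; rewrite ffunE; apply/eqP; rewrite -absz_eq0 -leqn0 -sum_a.
  by rewrite (bigD1 y) //= leq_addr.
have [y ay_gt0] : exists y, 0 < a y.
  apply/existsP; apply: contra_eqT sum_a => /existsPn a_le0.
  suff -> : (\sum_y `|a y|)%N = 0%N by [].
  apply/eqP; rewrite sum_nat_eq0; apply/forallP => z; apply/implyP => _.
  by rewrite absz_eq0 eq_le a_ge0 andbT leNgt a_le0.
set a' := a - ebasis y.
have -> : a = a' + ebasis y by rewrite subrK.
rewrite lamD_ebasis groupM //; first by apply: mem_gen; apply/imsetP; exists ((lam a')^-1 y)%g.
apply: IH => [z|].
  by rewrite /a' !ffunE; case: eqP => [<-|_]; rewrite ?subr0 ?subr_ge0.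
have [m am] : exists m, a y = Posz m.+1 by case: (a y) ay_gt0 => [[|m]|m] //= _; exists m.
rewrite (bigD1 y) //= (eq_bigr (fun z => `|a z|%N)) => [|z zy]; last first.
  by rewrite /a' !ffunE eq_sym (negPf zy) subr0.
have -> : `|a' y|%N = m by rewrite /a' !ffunE eqxx am -addn1 PoszD addrK.
by move: sum_a; rewrite (bigD1 y) //= am => -[].
Qed.

Definition lam_periodic (M : nat) := forall a b, lam (a + b *+ M) = lam a.

(* The brace addition lam a + lam b := lam (a + b) on G(X, r) is well defined. *)
Definition lam_add_compat := forall a a' b, lam a = lam a' -> lam (a + b) = lam (a' + b).

Lemma lam_in_Gcal (M : nat) : (0 < M)%N -> lam_periodic M ->
  forall a, lam a \in Gcal (r_of s).
Proof.
move=> M_gt0 lam_per a; pose K := (\sum_y `|a y|)%N.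
rewrite -(lam_per a [ffun _ => Posz K]).
apply: (@lam_nonneg_in_Gcal _ _ _ (erefl _)) => y.
rewrite ffunE ffunMnE ffunE.
have : (`|a y| <= K)%N by rewrite /K (bigD1 y) //= leq_addr.
clearbody K; move: (a y) => x; nia.
Qed.

End StructureGroupLambda.

Definition sig_ext (Y : finType) (sY : Y -> Y -> Y) (q : nat) (u v : 'Z_q * Y) : 'Z_q * Y :=
  (v.1 + ((u.2 == sY u.2 v.2) : nat)%:R, sY u.2 v.2)%R.

Section Extension.
Local Open Scope ring_scope.
Variables (Y : finType) (sY : Y -> Y -> Y) (q : nat).
Hypothesis q_gt1 : (1 < q)%N.
Hypothesis sY_inj : forall x, injective (sY x).

Local Notation X := ('Z_q * Y)%type.
Local Notation sX := (@sig_ext Y sY q).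
Local Notation delta x w := (((x == w) : nat)%:R : 'Z_q).

Lemma sig_extE u v : sX u v = (v.1 + delta u.2 (sY u.2 v.2), sY u.2 v.2).
Proof. by []. Qed.

Lemma sig_ext_inj u : injective (sX u).
Proof.
case=> b y [b' y'] /pair_equal_spec [/= e1 /sY_inj e2].
by subst y'; rewrite (addIr _ e1).
Qed.

Lemma finv_sig_ext w t : finv (sX w) t = (t.1 - delta w.2 t.2, finv (sY w.2) t.2).
Proof.
apply: (@sig_ext_inj w); rewrite f_finv; last exact: sig_ext_inj.
by rewrite sig_extE /= f_finv //; case: t => a x /=; rewrite subrK.
Qed.

Lemma sig_ext_braid : sigma_braid sY -> sigma_braid sX.
Proof.
move=> braid [a x] [b y] [c z].
rewrite [sX (_, _) (_, _)]sig_extE /= finv_sig_ext /= !sig_extE /= braid.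
set y1 := sY x y; set x1 := finv (sY y1) x.
have -> : delta x1 (sY x1 z) = delta x (sY x (sY y z)).
  by rewrite -braid -(inj_eq (@sY_inj y1)) /x1 f_finv.
have -> : delta y1 (sY x (sY y z)) = delta y (sY y z) by rewrite /y1 (inj_eq (@sY_inj x)).
by rewrite -!addrA [delta x _ + _]addrC.
Qed.

Lemma gam_ext_inj : (forall y, injective (fun x => finv (sY (sY x y)) x)) ->
  forall v, injective (fun t => finv (sX (sX t v)) t).
Proof.
move=> gam_inj v [a x] [a' x'] /=; rewrite !finv_sig_ext.
case/pair_equal_spec => /= e1 /gam_inj e2.
by subst x'; rewrite (addIr _ e1).
Qed.

(* liftp f g realizes (f, g) of the semidirect product (Z/(q))^Y x| Sym(Y) inside Sym(X). *)
Definition liftf (f : {ffun Y -> 'Z_q}) (g : {perm Y}) (t : X) : X :=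
  (t.1 + f (g t.2), g t.2).

Lemma liftf_inj f g : injective (liftf f g).
Proof.
case=> a x [a' x'] /pair_equal_spec [/= e1 /perm_inj e2].
by subst x'; rewrite (addIr _ e1).
Qed.

Definition liftp f g : {perm X} := perm (@liftf_inj f g).

Lemma liftpE f g t : liftp f g t = (t.1 + f (g t.2), g t.2).
Proof. by rewrite permE. Qed.

Lemma liftpM f g f' g' :
  (liftp f g * liftp f' g')%g = liftp (pact g' f + f') (g * g')%g.
Proof. by apply/permP => t; rewrite permM !liftpE /= !ffunE permM permK addrA. Qed.

Lemma liftpV f g t : ((liftp f g)^-1)%g t = (t.1 - f t.2, (g^-1)%g t.2).
Proof.
apply: (@perm_inj _ (liftp f g)); rewrite permKV liftpE /= permKV subrK.
by case: t.
Qed.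

Lemma liftp_inj f g f' g' : liftp f g = liftp f' g' -> f = f' /\ g = g'.
Proof.
move=> e; have gg' : g = g'.
  by apply/permP => y; have := congr1 (fun h : {perm X} => (h (0, y)).2) e; rewrite !liftpE.
subst g'; split=> //; apply/ffunP => y.
have := congr1 (fun h : {perm X} => (h (0, (g^-1)%g y)).1) e.
by rewrite !liftpE /= permKV !add0r.
Qed.

Lemma sigp_ext u :
  sigp (r_of sX) u = liftp [ffun y => (ebasis u.2 y)%:~R] (sigp (r_of sY) u.2).
Proof.
by apply/permP => t; rewrite (sigpE sig_ext_inj) liftpE (sigpE sY_inj) sig_extE !ffunE.
Qed.

Definition pushf (a : {ffun X -> int}) : {ffun Y -> int} := [ffun y => \sum_c a (c, y)].
Definition pmod (c : {ffun Y -> int}) : {ffun Y -> 'Z_q} := [ffun y => (c y)%:~R].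

Lemma pushfD a b : pushf (a + b) = pushf a + pushf b.
Proof.
apply/ffunP => y; rewrite !ffunE -big_split /=.
by apply: eq_bigr => c _; rewrite ffunE.
Qed.

Lemma pushfMn a n : pushf (a *+ n) = pushf a *+ n.
Proof.
apply/ffunP => y; rewrite ffunMnE !ffunE -sumrMnl.
by apply: eq_bigr => c _; rewrite ffunMnE.
Qed.

Lemma pushf_ebasis u : pushf (ebasis u) = ebasis u.2.
Proof.
case: u => a x; apply/ffunP => y; rewrite !ffunE (bigD1 a) //= ffunE big1 ?addr0.
  by rewrite xpair_eqE eqxx.
by move=> c ca; rewrite ffunE xpair_eqE eq_sym (negPf ca).
Qed.

Lemma pushf_pact f g b : pushf (pact (liftp f g) b) = pact g (pushf b).
Proof.
apply/ffunP => y; rewrite !ffunE (reindex_inj (addIr (f y))) /=.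
by apply: eq_bigr => c _; rewrite ffunE liftpV /= addrK.
Qed.

Lemma pmodD c d : pmod (c + d) = pmod c + pmod d.
Proof. by apply/ffunP => y; rewrite !ffunE intrD. Qed.

Lemma pmod_pact g c : pmod (pact g c) = pact g (pmod c).
Proof. by apply/ffunP => y; rewrite !ffunE. Qed.

Lemma pmodMn_q c M : pmod (c *+ (q * M)) = 0.
Proof.
apply/ffunP => y; rewrite !ffunE ffunMnE rmorphMn mulrnA -[_ *+ q]mulr_natr.
by rewrite pchar_Zp // mulr0 mul0rn.
Qed.

Definition sd_coords (h : {perm X}) : {ffun Y -> 'Z_q} * {perm Y} :=
  let g := Defs.perm_of (fun y => (h (0, y)).2) in
  ([ffun y => (h (0, (g^-1)%g y)).1], g).

Lemma sd_coords_liftp f g : sd_coords (liftp f g) = (f, g).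
Proof.
rewrite /sd_coords; have -> : Defs.perm_of (fun y => (liftp f g (0, y)).2) = g.
  apply/permP => y; rewrite perm_ofE ?liftpE //.
  by move=> y1 y2; rewrite !liftpE; exact: perm_inj.
by congr (_, _); apply/ffunP => y; rewrite ffunE liftpE /= permKV add0r.
Qed.

(* brace_iso_sd p k is this statement for sY := sig p k.+1 and q := p k.+2. *)
Definition brace_iso_sd_ext : Prop :=
  exists (lamX : {ffun X -> int} -> {perm X}) (lamY : {ffun Y -> int} -> {perm Y}),
  [/\ is_lam (r_of sX) lamX, is_lam (r_of sY) lamY &
  exists F : {perm X} -> {ffun Y -> 'Z_q} * {perm Y},
  [/\ {in Gcal (r_of sX) &, injective F},
      forall g, g \in Gcal (r_of sX) -> (F g).2 \in Gcal (r_of sY),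
      forall i l, l \in Gcal (r_of sY) -> exists2 g, g \in Gcal (r_of sX) & F g = (i, l),
      {in Gcal (r_of sX) &, forall g h, F (h * g)%g = sd_mul (F g) (F h)}
    & forall a b c d, lamY c = (F (lamX a)).2 -> lamY d = (F (lamX b)).2 ->
        F (lamX (a + b)) = ((F (lamX a)).1 + (F (lamX b)).1, lamY (c + d))]].

Variables (lamY : {ffun Y -> int} -> {perm Y}) (M : nat).
Hypothesis lamYP : is_lam (r_of sY) lamY.
Hypothesis lamY_per : lam_periodic lamY M.
Hypothesis lamY_add : lam_add_compat lamY.
Hypothesis M_gt0 : (0 < M)%N.
Hypothesis q_coprime_M : coprime q M.

Definition lam_ext (a : {ffun X -> int}) : {perm X} :=
  liftp (pmod (pushf a)) (lamY (pushf a)).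

Lemma lam_extP : is_lam (r_of sX) lam_ext.
Proof.
case: lamYP => lam_e lamM; split=> [u|a b].
  by rewrite /lam_ext pushf_ebasis lam_e sigp_ext.
rewrite /lam_ext liftpM pushfD pushf_pact lamM pmodD pmod_pact.
by rewrite addrC.
Qed.

Lemma lam_ext_periodic : lam_periodic lam_ext (q * M).
Proof.
move=> a b; rewrite /lam_ext pushfD pushfMn pmodD pmodMn_q addr0.
by rewrite mulrnA lamY_per.
Qed.

Lemma lam_ext_add_compat : lam_add_compat lam_ext.
Proof.
move=> a a' b /liftp_inj [e1 e2].
by rewrite /lam_ext !pushfD !pmodD e1 (lamY_add _ e2).
Qed.

Lemma Gcal_ext_liftp g : g \in Gcal (r_of sX) ->
  exists f l, l \in Gcal (r_of sY) /\ g = liftp f l.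
Proof.
case/(Gcal_lam lam_extP) => a <-.
exists (pmod (pushf a)), (lamY (pushf a)); split=> //.
exact: (lam_in_Gcal lamYP M_gt0 lamY_per).
Qed.

(* Since M is invertible mod q, adding M-multiples to a preimage c of l adjusts its
   reduction mod q to any prescribed f without changing lamY c. *)
Lemma liftp_in_Gcal_ext f l : l \in Gcal (r_of sY) -> liftp f l \in Gcal (r_of sX).
Proof.
case/(Gcal_lam lamYP) => c <-.
have M_unit : (M%:R : 'Z_q) \is a GRing.unit by rewrite unitZpE.
pose d : {ffun Y -> int} :=
  [ffun y => Posz (nat_of_ord ((M%:R : 'Z_q)^-1 * (f y - (c y)%:~R)))].
pose c' := c + d *+ M.
pose a : {ffun X -> int} := [ffun t => if t.1 == 0 then c' t.2 else 0].
have push_a : pushf a = c'.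
  apply/ffunP => y; rewrite ffunE (bigD1 0) //= big1 ?addr0; first by rewrite ffunE eqxx.
  by move=> z z0; rewrite ffunE /= (negPf z0).
have pmod_c' : pmod c' = f.
  apply/ffunP => y; rewrite !ffunE ffunMnE intrD ffunE.
  set z := (M%:R : 'Z_q)^-1 * _.
  have -> : Posz (nat_of_ord z) *+ M = Posz (nat_of_ord z * M)%N by lia.
  rewrite -[(Posz _)%:~R]/((_ * _)%:R) natrM natr_Zp /z.
  by rewrite mulrC mulrA mulrV // mul1r addrC subrK.
have -> : liftp f (lamY c) = lam_ext a by rewrite /lam_ext push_a pmod_c' lamY_per.
apply: (lam_in_Gcal lam_extP _ lam_ext_periodic).
by rewrite muln_gt0 M_gt0 andbT ltnW.
Qed.

Lemma card_Gcal_ext : #|Y| = M -> #|Gcal (r_of sX)| = (q ^ M * #|Gcal (r_of sY)|)%N.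
Proof.
move=> cardY.
have -> : Gcal (r_of sX) =
    [set liftp fl.1 fl.2 | fl in setX [set: {ffun Y -> 'Z_q}] (Gcal (r_of sY))] :> {set _}.
  apply/setP => g; apply/idP/imsetP.
    by case/Gcal_ext_liftp => f [l [Gl ->]]; exists (f, l); rewrite ?inE.
  by case=> [[f l]]; rewrite inE /= => /andP [_ Gl] ->; apply: liftp_in_Gcal_ext.
rewrite card_in_imset; last by case=> f l [f' l'] _ _ /= /liftp_inj [-> ->].
by rewrite cardsX cardsT card_ffun cardY card_ord Zp_cast.
Qed.

Lemma transitive_ext (y0 : Y) : [transitive Gcal (r_of sY), on [set: Y] | 'P] ->
  [transitive Gcal (r_of sX), on [set: X] | 'P].
Proof.
move/reach_transitive => reachY; apply: (transitive_reach (0, y0)) => t t'.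
have [l Gl e] := reachY t.2 t'.2.
exists (liftp [ffun _ => t'.1 - t.1] l); first exact: liftp_in_Gcal_ext.
by rewrite liftpE ffunE e addrC subrK; case: t' e.
Qed.

Lemma brace_iso_sd_extP : brace_iso_sd_ext.
Proof.
exists lam_ext, lamY; split=> //; first exact: lam_extP.
exists sd_coords; split.
- move=> g h /Gcal_ext_liftp [f [l [_ ->]]] /Gcal_ext_liftp [f' [l' [_ ->]]].
  by rewrite !sd_coords_liftp => -[-> ->].
- by move=> g /Gcal_ext_liftp [f [l [Gl ->]]]; rewrite sd_coords_liftp.
- move=> i l Gl; exists (liftp i l); last exact: sd_coords_liftp.
  exact: liftp_in_Gcal_ext.
- move=> g h /Gcal_ext_liftp [f [l [_ ->]]] /Gcal_ext_liftp [f' [l' [_ ->]]].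
  by rewrite liftpM !sd_coords_liftp /sd_mul /= addrC.
- move=> a b c d; rewrite /lam_ext !sd_coords_liftp /= => lam_c lam_d.
  rewrite pushfD pmodD; congr (_, _).
  by rewrite (lamY_add _ (esym lam_c)) addrC (lamY_add _ (esym lam_d)) addrC.
Qed.

Lemma ret_rel_ext k u v : ret_rel (r_of sX) k.+1 u v = ret_rel (r_of sY) k u.2 v.2.
Proof.
elim: k u v => [|k IH] u v.
  apply/forallP/eqP => [h|e z]; last by rewrite /sig_of /= !sig_extE e.
  (* At w with sigma_{u.2} w = u.2 the Kronecker delta tells u.2 and v.2 apart. *)
  pose w := finv (sY u.2) u.2.
  have /eqP := h (0, w); rewrite /sig_of /= !sig_extE /= => /pair_equal_spec [e1 e2].
  rewrite /w f_finv // in e1 e2; rewrite -e2 eqxx in e1.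
  by case: eqP e1 => // _ /eqP; rewrite !add0r oner_eq0.
rewrite ret_relS [RHS]ret_relS; apply/forallP/forallP => h z.
  by have := h (0, z); rewrite IH.
by rewrite IH; exact: h z.2.
Qed.

Lemma ret_trivial_ext (L : nat) (y0 : Y) :
  (forall k, ret_trivial (r_of sY) k <-> (L <= k)%N) ->
  forall k, ret_trivial (r_of sX) k <-> (L.+1 <= k)%N.
Proof.
move=> levelY [|k].
  split=> // triv; have := triv (0, y0) (1, y0); rewrite /= xpair_eqE eqxx andbT.
  by rewrite eq_sym oner_eq0.
rewrite ltnS -levelY; split=> triv x y; first by have := triv (0, x) (0, y); rewrite ret_rel_ext.
by rewrite ret_rel_ext; apply: triv.
Qed.

Lemma ret_iso_ext : ret_iso_via (r_of sX) (r_of sY) (fun u => u.2).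
Proof.
split=> [y|u v|u v]; first by exists (0, y).
  have /= ret1 := ret_rel_ext 0 u v; split => [e z|e].
    by rewrite /sig_of /= !sig_extE e.
  by apply/eqP; rewrite -ret1; apply/forallP => z; apply/eqP; exact: e.
by rewrite /r_of /= finv_sig_ext.
Qed.

End Extension.

(* The lambda-map is part of the invariant because the next layer is built from it. *)
Record indec_mp_solution (Y : finType) (sY : Y -> Y -> Y) (M G L : nat) : Prop := {
  ims_inj : forall x, injective (sY x);
  ims_braid : sigma_braid sY;
  ims_gam_inj : forall y, injective (fun x => finv (sY (sY x y)) x);
  ims_card : #|Y| = M;
  ims_card_gt0 : (0 < M)%N;
  ims_transitive : [transitive Gcal (r_of sY), on [set: Y] | 'P];
  ims_card_Gcal : #|Gcal (r_of sY)| = G;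
  ims_lam : exists lam,
    [/\ is_lam (r_of sY) lam, lam_periodic lam M & lam_add_compat lam];
  ims_level : forall k, ret_trivial (r_of sY) k <-> (L <= k)%N }.

Lemma indec_mp_solution_is_solution (Y : finType) (sY : Y -> Y -> Y) (M G L : nat) :
  indec_mp_solution sY M G L -> is_solution (r_of sY).
Proof. by case=> sY_inj braid gam_inj *; exact: r_of_solution. Qed.

Lemma indec_mp_solution_ext (Y : finType) (sY : Y -> Y -> Y) (M G L q : nat) :
  indec_mp_solution sY M G L -> (1 < q)%N -> coprime q M ->
  indec_mp_solution (@sig_ext Y sY q) (q * M) (q ^ M * G) L.+1.
Proof.
case=> sY_inj braid gam_inj cardY M_gt0 trY cardG [lam [lamP lam_per lam_add]] levelY.
move=> q_gt1 q_coprime_M.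
have [y0 _] : exists y0, y0 \in [set: Y] by apply/card_gt0P; rewrite cardsT cardY.
split.
- exact: sig_ext_inj.
- exact: sig_ext_braid.
- exact: gam_ext_inj.
- by rewrite card_prod card_ord Zp_cast // cardY.
- by rewrite muln_gt0 M_gt0 andbT ltnW.
- exact: (transitive_ext q_gt1 sY_inj lamP lam_per M_gt0 q_coprime_M y0 trY).
- by rewrite (card_Gcal_ext q_gt1 sY_inj lamP lam_per M_gt0 q_coprime_M cardY) cardG.
- exists (lam_ext (q := q) lam); split.
  + exact: lam_extP.
  + exact: lam_ext_periodic.
  + exact: lam_ext_add_compat.
- exact: ret_trivial_ext y0 levelY.
Qed.

Section Base.
Local Open Scope ring_scope.
Variable q : nat.
Hypothesis q_gt1 : (1 < q)%N.

Definition sig_base (x y : 'Z_q) : 'Z_q := y + 1.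

Lemma sig_base_inj x : injective (sig_base x).
Proof. exact: addIr. Qed.

Definition shiftp (c : 'Z_q) : {perm 'Z_q} := perm (addIr c).

Lemma shiftpE c y : shiftp c y = y + c.
Proof. by rewrite permE. Qed.

Definition lam_base (a : {ffun 'Z_q -> int}) : {perm 'Z_q} := shiftp (\sum_y a y)%:~R.

Lemma lam_baseP : is_lam (r_of sig_base) lam_base.
Proof.
split=> [x|a b]; apply/permP => y.
  rewrite shiftpE (sigpE sig_base_inj) (bigD1 x) //= big1 ?addr0; first by rewrite ffunE eqxx.
  by move=> z zx; rewrite ffunE eq_sym (negPf zx).
rewrite permM !shiftpE (eq_bigr (fun y => a y + pact (lam_base a) b y)); last first.
  by move=> z _; rewrite ffunE.
by rewrite big_split /= sum_pact intrD -addrA (addrC (_%:~R)).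
Qed.

Lemma lam_base_periodic : lam_periodic lam_base q.
Proof.
move=> a b; rewrite /lam_base (eq_bigr (fun y => a y + b y *+ q)); last first.
  by move=> z _; rewrite ffunE ffunMnE.
rewrite big_split /= sumrMnl intrD rmorphMn -[_ *+ q]mulr_natr pchar_Zp //.
by rewrite mulr0 addr0.
Qed.

Lemma lam_base_add_compat : lam_add_compat lam_base.
Proof.
move=> a a' b e; have := congr1 (fun g : {perm 'Z_q} => g 0) e.
rewrite !shiftpE !add0r => {}e; rewrite /lam_base.
rewrite (eq_bigr (fun y => a y + b y)) => [|z _]; last by rewrite ffunE.
rewrite [in RHS](eq_bigr (fun y => a' y + b y)) => [|z _]; last by rewrite ffunE.
by rewrite !big_split /= !intrD e.
Qed.

Lemma Gcal_base : Gcal (r_of sig_base) = [set shiftp c | c in 'Z_q] :> {set _}.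
Proof.
apply/setP => g; apply/idP/imsetP => [/(Gcal_lam lam_baseP) [a <-]|[c _ ->]].
  by eexists.
pose a : {ffun 'Z_q -> int} := [ffun z => if z == 0 then Posz (nat_of_ord c) else 0].
have <- : lam_base a = shiftp c.
  rewrite /lam_base (bigD1 0) //= big1 ?addr0 => [|z z0]; last by rewrite ffunE (negPf z0).
  by rewrite ffunE eqxx -[(Posz _)%:~R]/((nat_of_ord c)%:R) natr_Zp.
exact: (lam_in_Gcal lam_baseP (ltnW q_gt1) lam_base_periodic).
Qed.

Lemma indec_mp_solution_base : indec_mp_solution sig_base q q 1.
Proof.
split.
- exact: sig_base_inj.
- by [].
- move=> y a b e.
  rewrite -(f_finv (sig_base_inj (x := sig_base a y)) a).
  by rewrite -(f_finv (sig_base_inj (x := sig_base b y)) b) e.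
- by rewrite card_ord Zp_cast.
- exact: ltnW.
- apply: (transitive_reach 0) => x y; exists (shiftp (y - x)).
    by rewrite Gcal_base; apply: imset_f.
  by rewrite shiftpE addrC subrK.
- rewrite Gcal_base card_in_imset ?card_ord ?Zp_cast // => c c' _ _ e.
  by have := congr1 (fun g : {perm 'Z_q} => g 0) e; rewrite !shiftpE !add0r.
- exists lam_base; split.
  + exact: lam_baseP.
  + exact: lam_base_periodic.
  + exact: lam_base_add_compat.
- case=> [|k]; split=> // triv.
    by have := triv 0 1; rewrite /= eq_sym oner_eq0.
  by move=> x y; apply/forallP => z; exact: ret_rel_refl.
Qed.

End Base.

Lemma coprime_prime_prod (n : nat) (p : nat -> nat) :
  (forall i, (1 <= i <= n)%N -> prime (p i)) ->
  (forall i k, (1 <= i <= n)%N -> (1 <= k <= n)%N -> p i = p k -> i = k) ->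
  forall k, (k.+2 <= n)%N -> coprime (p k.+2) (\prod_(1 <= i < k.+2) p i).
Proof.
move=> p_prime p_inj k kn; rewrite big_nat.
apply: (big_ind (coprime (p k.+2))) => [|x y cx cy|i /andP [i_ge1 i_lt]].
- exact: coprimen1.
- by rewrite coprimeMr cx cy.
have i_le : (1 <= i <= n)%N by rewrite i_ge1 /=; lia.
have k_le : (1 <= k.+2 <= n)%N by rewrite kn.
rewrite prime_coprime ?p_prime // dvdn_prime2 ?p_prime //.
by apply/eqP => /(p_inj _ _ k_le i_le); lia.
Qed.

(* sig p k.+2 unfolds to sig_ext (sig p k.+1) (p k.+2), so each step is an extension. *)
Lemma indec_mp_solution_sig (n : nat) (p : nat -> nat) :
  (forall i, (1 <= i <= n)%N -> prime (p i)) ->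
  (forall i k, (1 <= i <= n)%N -> (1 <= k <= n)%N -> p i = p k -> i = k) ->
  forall k, (k.+1 <= n)%N ->
  indec_mp_solution (sig p k.+1) (\prod_(1 <= i < k.+2) p i)
    (p 1 * \prod_(2 <= i < k.+2) p i ^ (\prod_(1 <= l < i) p l)) k.+1.
Proof.
move=> p_prime p_inj; elim=> [|k IH] kn.
  rewrite big_nat1 big_geq // muln1.
  by apply: indec_mp_solution_base; apply: prime_gt1; apply: p_prime; rewrite leqnn.
have p_gt1 : (1 < p k.+2)%N by apply: prime_gt1; apply: p_prime; rewrite kn.
have card_eq : (\prod_(1 <= i < k.+3) p i = p k.+2 * \prod_(1 <= i < k.+2) p i)%N.
  by rewrite big_nat_recr // mulnC.
have card_Gcal_eq : (p 1 * \prod_(2 <= i < k.+3) p i ^ (\prod_(1 <= l < i) p l) =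
    p k.+2 ^ (\prod_(1 <= i < k.+2) p i) *
    (p 1 * \prod_(2 <= i < k.+2) p i ^ (\prod_(1 <= l < i) p l)))%N.
  by rewrite big_nat_recr // mulnCA [X in (_ * X)%N]mulnC.
rewrite card_eq card_Gcal_eq.
exact: indec_mp_solution_ext (IH (ltnW kn)) p_gt1 (coprime_prime_prod p_prime p_inj kn).
Qed.

Theorem mainTheorem9 (n : nat) (p : nat -> nat) :
  (1 <= n)%N ->
  (forall i, (1 <= i <= n)%N -> prime (p i)) ->
  (forall i k, (1 <= i <= n)%N -> (1 <= k <= n)%N -> p i = p k -> i = k) ->
  (forall k, (k.+2 <= n)%N ->
     [/\ is_solution (rX p k.+2),
         indecomposable (rX p k.+2),
         #|Xt p k.+2| = (\prod_(1 <= i < k.+3) p i)%N,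
         ret_iso_via (rX p k.+2) (rX p k.+1) (proj p k)
       & brace_iso_sd p k]) /\
  [/\ is_solution (rX p n) /\ indecomposable (rX p n),
      multiperm (rX p n),
      #|Xt p n| = (\prod_(1 <= i < n.+1) p i)%N,
      mp_level (rX p n) n
    & #|Gcal (rX p n)| = (p 1 * \prod_(2 <= i < n.+1) p i ^ (\prod_(1 <= l < i) p l))%N].
Proof.
move=> n_gt0 p_prime p_inj; have tower := indec_mp_solution_sig p_prime p_inj.
split=> [k kn|].
  have [T1 T2] := (tower k (ltnW kn), tower k.+1 kn).
  have [lam [lamP lam_per lam_add]] := ims_lam T1.
  have p_gt1 : (1 < p k.+2)%N by apply: prime_gt1; apply: p_prime; rewrite kn.
  split.
  - exact: indec_mp_solution_is_solution T2.
  - exact: ims_transitive T2.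
  - exact: ims_card T2.
  - exact: ret_iso_ext (ims_inj T1).
  - exact (brace_iso_sd_extP p_gt1 (ims_inj T1) lamP lam_per lam_add
             (ims_card_gt0 T1) (coprime_prime_prod p_prime p_inj kn)).
case: n n_gt0 p_prime p_inj tower => // n _ _ _ tower.
have T := tower n (leqnn _); have level := ims_level T.
split; first split.
- exact: indec_mp_solution_is_solution T.
- exact: ims_transitive T.
- by exists n.+1; apply/level.
- exact: ims_card T.
- by split=> [|k kn /level]; [apply/level | rewrite leqNgt kn].
- exact: ims_card_Gcal T.
Qed.
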